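(* Let $\phi=\frac{1+\sqrt5}{2}$ and let $n\ge 2$ be an integer. Let $G$ be a bipartite multigraph consisting of $n$ matchings $M_1,\dots,M_n$ (not necessarily edge-disjoint), each with at least $\phi n+20n/\log n$ edges. Then $G$ contains a rainbow matching with $n$ edges.
   Context: $\log$ denotes the natural logarithm. Each matching $M_i$ is a colour class (colour $i$); if the same pair of vertices is an edge of several $M_i$, these are treated as distinct parallel edges of different colours. A matching is rainbow if it contains at most one edge of each colour. *)

From mathcomp Require Import all_boot.
From Stdlib Require Import Reals.
Set Implicit Arguments. Unset Strict Implicit. Unset Printing Implicit Defensive.

(* A bipartite multigraph with parts A and B (finite vertex types) and n colour
   classes; colour class i is the set of edges M i : {set A * B}, each edge
   being a pair (a, b) with a in part A and b in part B. Edges of different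
   colours on the same pair of vertices are distinct (parallel) edges. *)

Definition is_matching (A B : finType) (M : {set A * B}) : Prop :=
  forall e f, e \in M -> f \in M -> e != f -> (e.1 != f.1) /\ (e.2 != f.2).

Definition is_rainbow_matching (A B : finType) (n : nat)
  (M : 'I_n -> {set A * B}) (R : {set 'I_n * (A * B)}) : Prop :=
  (forall p, p \in R -> p.2 \in M p.1) /\
  (forall p q, p \in R -> q \in R -> p != q ->
     [/\ p.1 != q.1, p.2.1 != q.2.1 & p.2.2 != q.2.2]).

Definition golden_ratio : R := ((1 + sqrt 5) / 2)%R.

From mathcomp Require Import all_boot zify boolp.
From Stdlib Require Import Reals Lra.
(* [Reals] rebinds [^] in [nat_scope]; restore ssrnat's [expn]. *)
Import ssrnat.
Set Implicit Arguments. Unset Strict Implicit. Unset Printing Implicit Defensive.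

(* Let g be a partial rainbow matching with k < n colours that cannot be augmented,
   and c a colour it misses.  An alternating step lets the idle colour u take an edge
   (x, b) whose A-end x is unused and whose B-end b is the B-end of the edge of some
   colour v of g; then v gives up its edge and becomes the idle colour.  Since an idle
   colour never has an edge with two free ends, a colour with at least s edges reached
   after d steps can continue to at least s - k - 2d colours, while a colour can be
   entered from at most 2k + d + 2 - s colours.  When 5s >= 8k + 7d + 6 the number of
   colours reachable within d steps thus grows by a factor 3/2 per step, and it would
   exceed n after about 2 log2 n steps.  The hypothesis gives s >= 8n/5 + 20n/ln n,
   which is enough. *)

Lemma matching_card_cover (A B : finType) (M : {set A * B}) (SA : {set A}) (SB : {set B}) :
  is_matching M -> {in M, forall e, (e.1 \in SA) || (e.2 \in SB)} -> #|M| <= #|SA| + #|SB|.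
Proof.
move=> Mm cover.
have card_end (T : finType) (p : A * B -> T) (S : {set T}) :
    (forall e f, e \in M -> f \in M -> e != f -> p e != p f) ->
    #|[set e in M | p e \in S]| <= #|S|.
  move=> p_inj; rewrite -(@card_in_imset _ _ p); last first.
    move=> e f; rewrite !inE => /andP[eM _] /andP[fM _] ef.
    by apply/eqP/negPn/negP => /(p_inj e f eM fM); rewrite ef eqxx.
  by apply/subset_leq_card/subsetP => x /imsetP[e]; rewrite inE => /andP[_ ?] ->.
have sub : M \subset [set e in M | e.1 \in SA] :|: [set e in M | e.2 \in SB].
  by apply/subsetP => e eM; rewrite !inE -andb_orr eM cover.
rewrite (leq_trans (subset_leq_card sub)) // (leq_trans (leq_card_setU _ _)) //.
by apply: leq_add; apply: card_end => e f eM fM ef; case: (Mm e f eM fM ef).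
Qed.

Lemma sum_card_rel (T : finType) (r : rel T) :
  \sum_u #|[set v | r u v]| = \sum_v #|[set u | r u v]|.
Proof.
have card_row (S : {set T}) : #|S| = \sum_v (v \in S : nat).
  by rewrite -sum1_card big_mkcond; apply: eq_bigr => v _; case: (v \in S).
transitivity (\sum_u \sum_v (r u v : nat)).
  by apply: eq_bigr => u _; rewrite card_row; apply: eq_bigr => v _; rewrite inE.
rewrite exchange_big; apply: eq_bigr => v _; rewrite card_row.
by apply: eq_bigr => u _; rewrite inE.
Qed.

Section PartialRainbow.
Variables (A B : finType) (n : nat) (M : 'I_n -> {set A * B}).

Definition partial_rainbow (h : 'I_n -> option (A * B)) : Prop :=
  (forall u e, h u = Some e -> e \in M u) /\
  (forall u v e f, u != v -> h u = Some e -> h v = Some f -> e.1 != f.1 /\ e.2 != f.2).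

Definition used (h : 'I_n -> option (A * B)) : {set 'I_n} := [set u | isSome (h u)].

Definition freeA (h : 'I_n -> option (A * B)) (x : A) := forall u e, h u = Some e -> e.1 != x.
Definition freeB (h : 'I_n -> option (A * B)) (y : B) := forall u e, h u = Some e -> e.2 != y.

Definition recolour (h : 'I_n -> option (A * B)) v o w := if w == v then o else h w.

Lemma partial_rainbow0 : partial_rainbow (fun _ => None).
Proof. by []. Qed.

Lemma partial_rainbow_uncolour h v : partial_rainbow h -> partial_rainbow (recolour h v None).
Proof.
move=> [hM hD]; split=> [u e|u w e f uw]; rewrite /recolour; first by case: eqP => // _ /hM.
by case: eqP => // _; case: eqP => // _; apply: hD.
Qed.

Lemma partial_rainbow_colour h v e : partial_rainbow h -> e \in M v ->
  freeA h e.1 -> freeB h e.2 -> partial_rainbow (recolour h v (Some e)).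
Proof.
move=> [hM hD] eM fa fb; split=> [u f|u w f f' uw]; rewrite /recolour.
  by case: eqP => [-> [<-] //|_ /hM].
have [uv|uv] := eqVneq u v; have [wv|wv] := eqVneq w v.
- by move: uw; rewrite uv wv eqxx.
- by move=> [<-] hw; split; rewrite eq_sym; [apply: fa hw|apply: fb hw].
- by move=> hu [<-]; split; [apply: fa hu|apply: fb hu].
- exact: hD.
Qed.

Lemma used_uncolour h v : used (recolour h v None) = used h :\ v.
Proof. by apply/setP => w; rewrite !inE /recolour; case: eqP. Qed.

Lemma used_colour h v e : used (recolour h v (Some e)) = v |: used h.
Proof. by apply/setP => w; rewrite !inE /recolour; case: eqP. Qed.

Lemma freeA_uncolour h v x : freeA h x -> freeA (recolour h v None) x.
Proof. by move=> fx u e; rewrite /recolour; case: eqP => // _; apply: fx. Qed.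

Lemma freeB_uncolour h v y : freeB h y -> freeB (recolour h v None) y.
Proof. by move=> fy u e; rewrite /recolour; case: eqP => // _; apply: fy. Qed.

Lemma freeA_colour h v e x : freeA h x -> e.1 != x -> freeA (recolour h v (Some e)) x.
Proof. by move=> fx ex u f; rewrite /recolour; case: eqP => [_ [<-] //|_]; apply: fx. Qed.

Lemma freeB_colour h v e y : freeB h y -> e.2 != y -> freeB (recolour h v (Some e)) y.
Proof. by move=> fy ey u f; rewrite /recolour; case: eqP => [_ [<-] //|_]; apply: fy. Qed.

Lemma freeA_uncolour_edge h v e : partial_rainbow h -> h v = Some e ->
  freeA (recolour h v None) e.1.
Proof.
move=> [_ hD] hv u f; rewrite /recolour; case: eqP => // /eqP uv hu.
by have [] := hD u v f e uv hu hv.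
Qed.

Lemma freeB_uncolour_edge h v e : partial_rainbow h -> h v = Some e ->
  freeB (recolour h v None) e.2.
Proof.
move=> [_ hD] hv u f; rewrite /recolour; case: eqP => // /eqP uv hu.
by have [] := hD u v f e uv hu hv.
Qed.

Lemma rainbow_matching_of_partial h : partial_rainbow h ->
  exists R, is_rainbow_matching M R /\ #|R| = #|used h|.
Proof.
move=> [hM hD]; pose R := [set p : 'I_n * (A * B) | h p.1 == Some p.2].
have R_fst p q : p \in R -> q \in R -> p.1 = q.1 -> p = q.
  by case: p q => [u e] [w f]; rewrite !inE /= => /eqP hu /eqP + uw; rewrite -uw hu => -[->].
exists R; split; first split.
- by move=> p; rewrite inE => /eqP; apply: hM.
- move=> p q pR qR pq; have p1q1 : p.1 != q.1 by apply: contra pq => /eqP/(R_fst p q pR qR)->.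
  move: pR qR; rewrite !inE => /eqP hp /eqP hq.
  by have [] := hD _ _ _ _ p1q1 hp hq; split.
- rewrite -(card_in_imset (R_fst : {in R &, injective fst})).
  suff -> : fst @: R = used h by [].
  apply/setP => u; rewrite inE; apply/imsetP/idP => [[p] | ].
    by rewrite inE => /eqP hp ->; rewrite hp.
  by case E : (h u) => [e|] // _; exists (u, e); rewrite ?inE ?E.
Qed.

End PartialRainbow.

Lemma geometric_growth (r : nat -> nat) a b D :
  (forall d, d < D -> a * r d <= b * r d.+1) -> a ^ D * r 0 <= b ^ D * r D.
Proof.
elim: D => [|D IH] step; first by rewrite !expn0 !mul1n.
have le_rD : a ^ D * r 0 <= b ^ D * r D by apply: IH => d /ltnW; apply: step.
have := step D (ltnSn D); rewrite !expnS; nia.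
Qed.

Lemma expn_gap L m : m < 2 ^ L.+1 -> 2 ^ (2 * L.+1) * m < 3 ^ (2 * L.+1).
Proof.
move=> mL; rewrite !expnM; apply: (@leq_trans (4 ^ L.+1 * 2 ^ L.+1)).
  by rewrite ltn_pmul2l ?expn_gt0.
by rewrite -expnMn leq_exp2r.
Qed.

Section AlternatingPaths.
Variables (A B : finType) (n : nat) (M : 'I_n -> {set A * B}).
Hypothesis M_matching : forall i, is_matching (M i).
Variables (g : 'I_n -> option (A * B)) (c : 'I_n).
(* A dummy edge, making [ga] and [gb] total. *)
Variable e0 : A * B.
Hypothesis g_rainbow : partial_rainbow M g.
Hypothesis g_c : g c = None.
Hypothesis g_unaugmentable : forall h, partial_rainbow M h -> #|used h| <> #|used g|.+1.

Local Notation C := (used g).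
Local Notation k := #|C|.
Definition ga u := (odflt e0 (g u)).1.
Definition gb u := (odflt e0 (g u)).2.
Local Notation VA := [set ga u | u in C].
Local Notation VB := [set gb u | u in C].

Lemma g_used u : u \in C -> g u = Some (ga u, gb u).
Proof. by rewrite inE /ga /gb; case: (g u) => // -[]. Qed.

Lemma c_unused : c \notin C.
Proof. by rewrite inE g_c. Qed.

Lemma free_outside_VA x : x \notin VA -> freeA g x.
Proof.
move=> xV u e gu; apply: contra xV => /eqP <-; apply/imsetP; exists u; last by rewrite /ga gu.
by rewrite inE gu.
Qed.

Lemma free_outside_VB y : y \notin VB -> freeB g y.
Proof.
move=> yV u e gu; apply: contra yV => /eqP <-; apply/imsetP; exists u; last by rewrite /gb gu.
by rewrite inE gu.
Qed.

Lemma no_augmenting_edge h v e : partial_rainbow M h -> #|used h| = k -> h v = None ->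
  e \in M v -> freeA h e.1 -> freeB h e.2 -> False.
Proof.
move=> hr hk hv eM fa fb; apply: (g_unaugmentable (partial_rainbow_colour hr eM fa fb)).
by rewrite used_colour cardsU1 inE hv hk.
Qed.

(* [h] is obtained from [g] by moving along an alternating path that starts at
   colour [c], has recoloured the colours in [T] and used the fresh A-vertices in
   [W]; it ends at the colour [v], which is now idle. *)
Record alternating v (W : {set A}) (T : {set 'I_n}) h : Prop := Alternating {
  alt_rainbow : partial_rainbow M h;
  alt_size : #|used h| = k;
  alt_idle : h v = None;
  alt_agree : forall w, w \in C -> w \notin T -> h w = g w;
  alt_freeA : forall x, x \notin VA -> x \notin W -> freeA h x;
  alt_freeT : forall w, w \in T -> freeA h (ga w);
  alt_freeB : forall y, y \notin VB -> freeB h y;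
  alt_origin : (v == c) || (v \in T);
  alt_sub : T \subset C }.

Definition reachable v W T := exists h, alternating v W T h.

Lemma reachable_start : reachable c set0 set0.
Proof.
exists g; split=> //; rewrite ?eqxx ?sub0set //.
- by move=> x xV _; apply: free_outside_VA.
- by move=> w; rewrite inE.
- exact: free_outside_VB.
Qed.

Lemma reachable_in_T v W T : reachable v W T -> v \in C -> v \in T.
Proof.
move=> [h H] vC; case/orP: (alt_origin H) => // /eqP vc.
by move: c_unused; rewrite -vc vC.
Qed.

Lemma reachable_in_C v W T : reachable v W T -> v != c -> v \in C.
Proof.
move=> [h H] vc; case/orP: (alt_origin H) => [/eqP/eqP|]; first by rewrite (negbTE vc).
exact: (subsetP (alt_sub H)).
Qed.

Lemma reachable_step u W T v x : reachable u W T -> v \in C -> v \notin T ->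
  x \notin VA -> x \notin W -> (x, gb v) \in M u -> reachable v (x |: W) (v |: T).
Proof.
move=> Ru vC vT xV xW xM; case: (Ru) => h H.
have uT : u \in C -> u \in T := reachable_in_T Ru.
have uv : u != v by apply: contraNneq vT => uv; rewrite -uv; apply: uT; rewrite uv.
have hv : h v = Some (ga v, gb v) by rewrite (alt_agree H) // g_used.
have x_ga w : w \in C -> x != ga w by move=> wC; apply: contraNneq xV => ->; apply: imset_f.
pose h' := recolour (recolour h v None) u (Some (x, gb v)).
exists h'; split.
- apply: partial_rainbow_colour xM _ (freeB_uncolour_edge (alt_rainbow H) hv).
    exact: partial_rainbow_uncolour (alt_rainbow H).
  exact/freeA_uncolour/(alt_freeA H).
- have vh : v \in used h by rewrite inE hv.
  rewrite used_colour used_uncolour cardsU1 !inE (alt_idle H) andbF add1n.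
  by rewrite -(alt_size H) (cardsD1 v (used h)) vh.
- by rewrite /h' /recolour eq_sym (negbTE uv) eqxx.
- move=> w wC; rewrite in_setU1 negb_or => /andP[wv wT].
  have wu : w != u by apply: contraNneq wT => wu; rewrite wu; apply: uT; rewrite -wu.
  by rewrite /h' /recolour (negbTE wu) (negbTE wv) (alt_agree H).
- move=> x'; rewrite in_setU1 negb_or => x'V /andP[x'x x'W].
  by apply: freeA_colour; [apply/freeA_uncolour/(alt_freeA H) | rewrite eq_sym].
- move=> w; rewrite in_setU1 => /orP[/eqP-> | wT].
    apply: freeA_colour; [exact: freeA_uncolour_edge (alt_rainbow H) hv | exact: x_ga].
  apply: freeA_colour; first exact/freeA_uncolour/(alt_freeT H).
  exact/x_ga/(subsetP (alt_sub H)).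
- move=> y yV; apply: freeB_colour; first exact/freeB_uncolour/(alt_freeB H).
  by apply: contraNneq yV => <-; apply: imset_f.
- by rewrite in_setU1 eqxx orbT.
- by rewrite subUset sub1set vC (alt_sub H).
Qed.

Lemma reachable_edge_VB v W T e : reachable v W T -> e \in M v ->
  e.1 \notin VA -> e.1 \notin W -> e.2 \in VB.
Proof.
move=> [h H] eM a1 a2; apply/negPn/negP => b2.
exact: no_augmenting_edge (alt_rainbow H) (alt_size H) (alt_idle H) eM
  (alt_freeA H a1 a2) (alt_freeB H b2).
Qed.

Lemma reachable_edge_T v W T w e : reachable v W T -> w \in T -> e \in M v ->
  e.1 = ga w -> e.2 \in VB.
Proof.
move=> [h H] wT eM a1; apply/negPn/negP => b2.
apply: no_augmenting_edge (alt_rainbow H) (alt_size H) (alt_idle H) eM _ (alt_freeB H b2).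
by rewrite a1; apply: alt_freeT H w wT.
Qed.

Definition exits u (W : {set A}) (T : {set 'I_n}) : {set 'I_n} :=
  [set v in C :\: T | [exists x, [&& x \notin VA, x \notin W & (x, gb v) \in M u]]].

Lemma card_exits u W T : reachable u W T -> #|M u| <= k + #|W| + #|T| + #|exits u W T|.
Proof.
move=> Ru.
have cover : {in M u, forall e, (e.1 \in VA :|: W) || (e.2 \in gb @: (T :|: exits u W T))}.
  move=> [a b] eM /=; rewrite in_setU; have [//|aV] := boolP (a \in VA).
  have [//|aW] := boolP (a \in W); case/imsetP: (reachable_edge_VB Ru eM aV aW) => w wC /= bw.
  rewrite bw imset_f // in_setU; have [//|wT] := boolP (w \in T).
  by rewrite inE in_setD wT wC; apply/existsP; exists a; rewrite aV aW -bw.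
apply: leq_trans (matching_card_cover (@M_matching u) cover) _.
rewrite -[X in _ <= X]addnA leq_add //.
  by apply: leq_trans (leq_card_setU _ _) _; rewrite leq_add2r leq_imset_card.
exact: leq_trans (leq_imset_card _ _) (leq_card_setU _ _).
Qed.

Definition step d u v := exists (W : {set A}) (T : {set 'I_n}),
  [/\ reachable u W T, #|W| <= d, #|T| <= d & v \in exits u W T].

Definition reached d : {set 'I_n} :=
  [set u | `[< exists W T, [/\ reachable u W T, #|W| <= d & #|T| <= d] >]].

Lemma step_reachable d u v : step d u v ->
  exists W T, [/\ reachable v W T, #|W| <= d.+1, #|T| <= d.+1 & (u \in C -> u \in T)].
Proof.
move=> [W [T [Ru hW hT]]]; rewrite inE in_setD => /andP[/andP[vT vC]].
move=> /existsP[x /and3P[xV xW xM]]; exists (x |: W), (v |: T); split.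
- exact: reachable_step Ru vC vT xV xW xM.
- by rewrite cardsU1; case: (x \in W) => /=; lia.
- by rewrite cardsU1 vT; lia.
- by move=> uC; rewrite in_setU1 (reachable_in_T Ru uC) orbT.
Qed.

Lemma card_preds d v : (exists u, step d u v) ->
  #|[set u | `[< step d u v >]]| + #|M v| <= 2 * k + d + 2.
Proof.
case=> u0 /step_reachable [W' [T' [Rv hW' _ _]]]; set P := [set u | `[< step d u v >]].
have P_sub : P \subset c |: (C :&: P).
  apply/subsetP => u uP; have := uP; rewrite inE => /asboolP [W [T [Ru _ _ _]]].
  rewrite in_setU1 in_setI uP andbT; case: eqP => // /eqP uc.
  exact: reachable_in_C Ru uc.
have cover : {in M v, forall e, (e.1 \in W' :|: ga @: (C :\: P)) || (e.2 \in VB)}.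
  move=> e eM; apply/orP; have [bV|bV] := boolP (e.2 \in VB); [by right | left].
  rewrite in_setU; have [//|aW] := boolP (e.1 \in W').
  have /imsetP[w wC aw] : e.1 \in VA.
    by apply: contraR bV => aV; apply: reachable_edge_VB Rv eM aV aW.
  rewrite aw imset_f // in_setD wC andbT; apply: contra bV.
  rewrite inE => /asboolP /step_reachable [W [T [Rv' _ _ wT]]].
  exact: reachable_edge_T Rv' (wT wC) eM aw.
have card_Mv : #|M v| <= d.+1 + #|C :\: P| + k.
  apply: leq_trans (matching_card_cover (@M_matching v) cover) _.
  rewrite leq_add ?leq_imset_card // (leq_trans (leq_card_setU _ _)) //.
  exact: leq_add hW' (leq_imset_card _ _).
have card_P : #|P| <= (#|C :&: P|).+1.
  by apply: leq_trans (subset_leq_card P_sub) _; rewrite cardsU1 -add1n leq_add2r leq_b1.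
(* [lia] would treat the two spellings of [#|C :&: P|] (with and without a
   [reverse_coercion] on ['I_n]) as distinct atoms. *)
have := cardsID P C; rewrite /reverse_coercion in card_P card_Mv *; lia.
Qed.

Variable s : nat.
Hypothesis M_large : forall i, s <= #|M i|.

Lemma reached_growth d :
  #|reached d| * (s - k - 2 * d) <= #|reached d.+1| * (2 * k + d + 2 - s).
Proof.
have out_deg : #|reached d| * (s - k - 2 * d) <= \sum_u #|[set v | `[< step d u v >]]|.
  rewrite -sum_nat_const big_mkcond /=; apply: leq_sum => u _; case: ifP => //.
  rewrite inE => /asboolP [W [T [Ru hW hT]]].
  have exits_succ : #|exits u W T| <= #|[set v | `[< step d u v >]]|.
    by apply/subset_leq_card/subsetP => v vE; rewrite inE; apply/asboolP; exists W, T.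
  rewrite !leq_subLR; apply: leq_trans (M_large u) (leq_trans (card_exits Ru) _).
  rewrite mul2n -addnn -!addnA leq_add2l.
  exact: leq_add hW (leq_add hT exits_succ).
rewrite (leq_trans out_deg) // (sum_card_rel (fun u v => `[< step d u v >])).
rewrite -sum_nat_const [X in _ <= X]big_mkcond /=; apply: leq_sum => v _.
have [[u suv]|no_pred] := pselect (exists u, step d u v).
  have [W [T [Rv hW hT _]]] := step_reachable suv.
  have -> : v \in reached d.+1 by rewrite inE; apply/asboolP; exists W, T.
  by rewrite -(addnK #|M v| #|_|) leq_sub // card_preds //; exists u.
rewrite (_ : [set u | _] = set0) ?cards0 //; apply/setP => u; rewrite !inE.
by apply/negbTE/asboolPn => suv; apply: no_pred; exists u.
Qed.

Lemma reached0 : c \in reached 0.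
Proof.
by rewrite inE; apply/asboolP; exists set0, set0; rewrite !cards0; split=> //; apply: reachable_start.
Qed.

Lemma reached_geometric D : 8 * k + 7 * D + 6 <= 5 * s -> k + 2 * D < s ->
  3 ^ D <= 2 ^ D * #|reached D|.
Proof.
move=> s_large s_large'.
have ratio d : d < D -> 3 * #|reached d| <= 2 * #|reached d.+1|.
  move=> dD; have := reached_growth d.
  set p := s - k - 2 * d; set q := 2 * k + d + 2 - s.
  have p_gt0 : 0 < p by rewrite /p; lia.
  have pq : 3 * q <= 2 * p by rewrite /p /q; lia.
  move=> grow; rewrite -(leq_pmul2r p_gt0); nia.
have := geometric_growth (r := fun d => #|reached d|) ratio.
have : 0 < #|reached 0| by apply/card_gt0P; exists c; apply: reached0.
nia.
Qed.

End AlternatingPaths.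

Lemma partial_rainbow_augment (A B : finType) (n : nat) (M : 'I_n -> {set A * B}) s L g :
  (forall i, is_matching (M i)) -> (forall i, s <= #|M i|) ->
  8 * n + 14 * L + 12 <= 5 * s -> n + 4 * L + 5 <= s -> n < 2 ^ L.+1 ->
  partial_rainbow M g -> #|used g| < n ->
  exists h, partial_rainbow M h /\ #|used h| = #|used g|.+1.
Proof.
move=> M_matching M_large s_large s_large' n_small g_rainbow g_small.
have /subsetPn[c _ cg] : ~~ ([set: 'I_n] \subset used g).
  by apply: contraTN g_small => /subset_leq_card; rewrite cardsT card_ord -leqNgt.
have g_c : g c = None by move: cg; rewrite inE; case: (g c).
have /card_gt0P[e0 _] : 0 < #|M c| by apply: leq_trans (M_large c); lia.
have [//|no_aug] := pselect (exists h, partial_rainbow M h /\ #|used h| = #|used g|.+1).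
have g_unaugmentable h : partial_rainbow M h -> #|used h| <> #|used g|.+1.
  by move=> hr hk; apply: no_aug; exists h.
have geo := @reached_geometric _ _ _ M M_matching g c e0 g_rainbow g_c g_unaugmentable s M_large
  (2 * L.+1) ltac:(lia) ltac:(lia).
have reached_n := leq_trans (max_card (mem (reached M g c e0 (2 * L.+1)))) (eq_leq (card_ord n)).
by have := leq_ltn_trans (leq_trans geo (leq_mul (leqnn _) reached_n)) (expn_gap n_small);
  rewrite ltnn.
Qed.

Lemma rainbow_matching_full (A B : finType) (n : nat) (M : 'I_n -> {set A * B}) s L :
  (forall i, is_matching (M i)) -> (forall i, s <= #|M i|) ->
  8 * n + 14 * L + 12 <= 5 * s -> n + 4 * L + 5 <= s -> n < 2 ^ L.+1 ->
  exists R, is_rainbow_matching M R /\ #|R| = n.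
Proof.
move=> M_matching M_large s_large s_large' n_small.
have partial m : m <= n -> exists h, partial_rainbow M h /\ #|used h| = m.
  elim: m => [_|m IH mn].
    exists (fun _ => None); split; first exact: partial_rainbow0.
    by apply/eqP; rewrite cards_eq0; apply/eqP/setP => u; rewrite !inE.
  have [h [hr hm]] := IH (ltnW mn); rewrite -hm.
  by apply: partial_rainbow_augment M_matching M_large s_large s_large' n_small hr _; rewrite hm.
have [h [hr hn]] := partial n (leqnn n).
have [R [RM RC]] := rainbow_matching_of_partial hr.
by exists R; rewrite RC hn.
Qed.

Lemma succ_sq_le_pow2 L : (L + 1) * (L + 1) <= 4 * 2 ^ L.
Proof.
elim: L => [//|L IH]; have := ltn_expl L.+1 (ltnSn 1).
rewrite !expnS; nia.
Qed.

Lemma pow2_le_exp m : (INR (2 ^ m) <= exp (INR m))%R.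
Proof.
elim: m => [|m IH]; first by rewrite expn0 /= exp_0; lra.
rewrite expnS -multE mult_INR (S_INR m) exp_plus.
have e_gt2 : (2 < exp 1)%R by have := exp_ineq1 1; lra.
have := pos_INR (2 ^ m); simpl INR; nra.
Qed.

Lemma ln_lt_succ_log n L : (1 <= n)%N -> (n < 2 ^ L.+1)%N -> (ln (INR n) < INR L + 1)%R.
Proof.
move=> n_pos nL; rewrite -S_INR -[X in (_ < X)%R](ln_exp (INR L.+1)).
apply: ln_increasing; first by apply: lt_0_INR; apply/ltP.
by apply: Rlt_le_trans (pow2_le_exp L.+1); apply: lt_INR; apply/ltP.
Qed.

Lemma golden_ratio_ge : (8 / 5 <= golden_ratio)%R.
Proof.
have : (11 / 5 <= sqrt 5)%R.
  by rewrite -(sqrt_square (11 / 5)); [apply: sqrt_le_1_alt | ]; lra.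
rewrite /golden_ratio; lra.
Qed.

(* With [2 ^ L <= n < 2 ^ L.+1], the term [20 n / ln n] is at least [20 n / (L + 1)],
   which dominates both [4 L + 5] and [(14 L + 12) / 5] because [(L + 1) ^ 2 <= 4 n]. *)
Lemma golden_bound_nat n m L : (2 <= n)%N -> (2 ^ L <= n)%N -> (n < 2 ^ L.+1)%N ->
  (golden_ratio * INR n + 20 * INR n / ln (INR n) <= INR m)%R ->
  (8 * n + 14 * L + 12 <= 5 * m)%N /\ (n + 4 * L + 5 <= m)%N.
Proof.
move=> n_ge2 nL nL' bound.
have sq : ((INR L + 1) * (INR L + 1) <= 4 * INR n)%R.
  rewrite -S_INR -mult_INR (_ : 4 = INR 4)%R; last by simpl; lra.
  rewrite -mult_INR; apply: le_INR; apply/leP.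
  have := succ_sq_le_pow2 L; rewrite addn1; lia.
have n2 : (2 <= INR n)%R by apply: (le_INR 2); apply/leP.
have ln_pos : (0 < ln (INR n))%R by rewrite -ln_1; apply: ln_increasing; lra.
have ln_lt := ln_lt_succ_log (ltnW n_ge2) nL'.
have L0 := pos_INR L; have phi := golden_ratio_ge.
set y := (20 * INR n / ln (INR n))%R in bound.
have y_ln : (y * ln (INR n) = 20 * INR n)%R by rewrite /y; field; lra.
have yL : (20 * INR n <= y * (INR L + 1))%R by nra.
have yA : (14 * INR L + 12 <= 5 * y)%R by apply: (Rmult_le_reg_r (INR L + 1)); nra.
have yB : (4 * INR L + 5 <= y)%R by apply: (Rmult_le_reg_r (INR L + 1)); nra.
split; apply/leP; apply: INR_le; rewrite -!multE -!plusE !plus_INR ?mult_INR; simpl INR; nra.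
Qed.

Theorem mainTheorem3 (A B : finType) (n : nat) (M : 'I_n -> {set A * B}) :
  (2 <= n)%N ->
  (forall i, is_matching (M i)) ->
  (forall i, (golden_ratio * INR n + 20 * INR n / ln (INR n) <= INR #|M i|)%R) ->
  exists R : {set 'I_n * (A * B)}, is_rainbow_matching M R /\ #|R| = n.
Proof.
move=> n_ge2 M_matching M_large.
pose L := trunc_log 2 n.
have nL : 2 ^ L <= n by apply: trunc_logP; lia.
have nL' : n < 2 ^ L.+1 by apply: trunc_log_ltn.
have [i0 _ i0_min] := arg_minnP (fun i => #|M i|) (isT : predT (Ordinal n_ge2)).
have [s_large s_large'] := golden_bound_nat n_ge2 nL nL' (M_large i0).
exact: rainbow_matching_full M_matching (fun i => i0_min i isT) s_large s_large' nL'.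
Qed.
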